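(* Let $\mathbb M$ be an $\mathcal R$-module. Then $\mathbb M$ is dually separated if and only if for every $R$-module $N$ the map $$\operatorname{Hom}_{\mathcal R}(\mathbb M,\mathcal N)\to \operatorname{Hom}_R(\mathbb M(R),N),\qquad f\mapsto f_R,$$ is injective.
   Context: $R$ is a commutative ring. An $\mathcal R$-module is a covariant functor $\mathbb M$ from the category of commutative $R$-algebras to abelian groups such that each $\mathbb M(S)$ is an $S$-module, compatibly with the maps $\mathbb M(S)\to\mathbb M(S')$ induced by $R$-algebra morphisms $S\to S'$. Morphisms of $\mathcal R$-modules are natural transformations $f$ with each $f_S$ $S$-linear. For an $R$-module $N$, $\mathcal N$ denotes the quasi-coherent $\mathcal R$-module $\mathcal N(S)=N\otimes_R S$. For an $\mathcal R$-module $\mathbb M$ and an $R$-algebra $S$, $\mathbb M_{|S}$ is the restriction of $\mathbb M$ to commutative $S$-algebras; the dual $\mathbb M^*$ is $\mathbb M^*(S)=\operatorname{Hom}_{\mathcal S}(\mathbb M_{|S},\mathcal S)$. $\mathbb M_{qc}$ is the quasi-coherent module associated with the $R$-module $\mathbb M(R)$, with natural morphism $\mathbb M_{qc}\to\mathbb M$, $m\otimes s\mapsto s\cdot m$; thus $\mathbb M_{qc}^*(S)=\operatorname{Hom}_R(\mathbb M(R),S)$. $\mathbb M$ is called dually separated if the induced morphism $\mathbb M^*\to\mathbb M_{qc}^*$ is a monomorphism, i.e. for every commutative $R$-algebra $S$ the map $\mathbb M^*(S)\to\operatorname{Hom}_R(\mathbb M(R),S)$, $w\mapsto w_R$, is injective.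 (All Hom-functors considered are assumed to be set-valued.) *)

From HB Require Import structures.
From mathcomp Require Import all_boot all_order all_algebra.
From Stdlib Require Import ClassicalEpsilon FunctionalExtensionality PropExtensionality.
Set Implicit Arguments.
Unset Strict Implicit.
Unset Printing Implicit Defensive.
Import GRing.Theory.
Local Open Scope ring_scope.

(* Commutative R-algebras: a commutative ring S with a ring morphism   *)
(* R -> S (the structure map).  The zero algebra is allowed.           *)
Record CAlg (R : comPzRingType) := {
  calg_ring :> comPzRingType;
  calg_str : {rmorphism R -> calg_ring}
}.

Record AlgHom (R : comPzRingType) (A B : CAlg R) := {
  ahom :> {rmorphism A -> B};
  ahom_str : forall r, ahom (calg_str A r) = calg_str B r
}.

Definition Ralg (R : comPzRingType) : CAlg R :=
  {| calg_ring := R; calg_str := (idfun : {rmorphism R -> R}) |}.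

Definition alg_unit (R : comPzRingType) (S : CAlg R) : AlgHom (Ralg R) S :=
  @Build_AlgHom R (Ralg R) S (calg_str S : {rmorphism Ralg R -> S}) (fun r => erefl).

Definition alg_id (R : comPzRingType) (S : CAlg R) : AlgHom S S :=
  @Build_AlgHom R S S (idfun : {rmorphism S -> S}) (fun r => erefl).

(* Functoriality is stated pointwise.                                  *)
Record RMod (R : comPzRingType) := {
  Mobj :> forall A : CAlg R, lmodType A;
  Mmap : forall (A B : CAlg R), AlgHom A B -> Mobj A -> Mobj B;
  Mmap_add : forall A B (g : AlgHom A B) (x y : Mobj A),
      Mmap g (x + y) = Mmap g x + Mmap g y;
  Mmap_scale : forall (A B : CAlg R) (g : AlgHom A B) (a : A) (x : Mobj A),
      Mmap g (a *: x) = g a *: Mmap g x;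
  Mmap_id : forall A (g : AlgHom A A), (forall a, g a = a) ->
      forall x, Mmap g x = x;
  Mmap_comp : forall A B C (g : AlgHom A B) (h : AlgHom B C) (k : AlgHom A C),
      (forall a, k a = h (g a)) -> forall x, Mmap k x = Mmap h (Mmap g x)
}.
Arguments Mmap {R} r {A B} _ _.

Record RHom (R : comPzRingType) (M M' : RMod R) := {
  hfun :> forall A : CAlg R, M A -> M' A;
  hfun_add : forall A (x y : M A), @hfun A (x + y) = @hfun A x + @hfun A y;
  hfun_scale : forall (A : CAlg R) (a : A) (x : M A), @hfun A (a *: x) = a *: @hfun A x;
  hfun_nat : forall A B (g : AlgHom A B) (x : M A),
      @hfun B (Mmap M g x) = Mmap M' g (@hfun A x)
}.

(* Dual: M^*(S) = Hom_S(M_{|S}, S).  A commutative S-algebra is        *)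
(* represented as an R-algebra T together with an R-algebra morphism   *)
(* phi : S -> T; morphisms of S-algebras are R-algebra morphisms        *)
(* commuting with these.  The quasi-coherent S-module S evaluated at    *)
(* (T, phi) is S (x)_S T = T.                                           *)
Record Dual (R : comPzRingType) (M : RMod R) (S : CAlg R) := {
  dfun :> forall (T : CAlg R) (phi : AlgHom S T), M T -> T;
  dfun_add : forall (T : CAlg R) (phi : AlgHom S T) (x y : M T),
      dfun phi (x + y) = dfun phi x + dfun phi y;
  dfun_scale : forall (T : CAlg R) (phi : AlgHom S T) (t : T) (x : M T), dfun phi (t *: x) = t * dfun phi x;
  dfun_nat : forall T T' (phi : AlgHom S T) (phi' : AlgHom S T') (g : AlgHom T T'),
      (forall s, g (phi s) = phi' s) ->
      forall x, dfun phi' (Mmap M g x) = g (dfun phi x)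
}.

(* w |-> w_R : M(R) -> S,  m |-> w_S (image of m in M(S)). *)
Definition dual_to_qc (R : comPzRingType) (M : RMod R) (S : CAlg R)
    (w : Dual M S) : M (Ralg R) -> S :=
  fun m => w S (alg_id S) (Mmap M (alg_unit S) m).

Definition dually_separated (R : comPzRingType) (M : RMod R) : Prop :=
  forall S : CAlg R, injective (@dual_to_qc R M S).

(* Tensor product N (x)_R S as an S-module (extension of scalars).     *)
(* Elements: formal sums  sum_i s_i (x) n_i  (lists of pairs) modulo    *)
(* the congruence generated by the tensor relations.                    *)
Section Tensor.
Variables (R : comPzRingType) (N : lmodType R).

Section Obj.
Variable (S : CAlg R).

Inductive teq : seq (S * N) -> seq (S * N) -> Prop :=
 | teq_refl x : teq x x
 | teq_sym x y : teq x y -> teq y x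
 | teq_trans x y z : teq x y -> teq y z -> teq x z
 | teq_cat x x' y y' : teq x x' -> teq y y' -> teq (x ++ y) (x' ++ y')
 | teq_catC x y : teq (x ++ y) (y ++ x)
 | teq_addl s s' n : teq [:: (s + s', n)] [:: (s, n); (s', n)]
 | teq_addr s n n' : teq [:: (s, n + n')] [:: (s, n); (s, n')]
 | teq_zero n : teq [:: (0, n)] [::]
 | teq_bal r s n : teq [:: (s, r *: n)] [:: (calg_str S r * s, n)].

Definition canon (x : seq (S * N)) : seq (S * N) :=
  epsilon (inhabits [::]) (teq x).

Lemma canon_spec x : teq x (canon x).
Proof. exact: (epsilon_spec (inhabits [::]) (teq x) (ex_intro _ x (teq_refl x))). Qed.

Lemma canon_eq x y : teq x y -> canon x = canon y.
Proof.
move=> h; rewrite /canon; congr (epsilon _ _).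
apply: functional_extensionality => z; apply: propositional_extensionality.
split=> hz; [exact: teq_trans (teq_sym h) hz | exact: teq_trans h hz].
Qed.

Lemma canon_idem x : canon (canon x) = canon x.
Proof. exact/canon_eq/teq_sym/canon_spec. Qed.

Definition tens := {x : seq (S * N) | canon x == x}.
HB.instance Definition _ := Choice.on tens.

Definition cl (x : seq (S * N)) : tens :=
  exist _ (canon x) (introT eqP (canon_idem x)).

Lemma cl_val (a : tens) : cl (val a) = a.
Proof. by apply: val_inj => /=; apply/eqP/(valP a). Qed.

Lemma cl_eq x y : teq x y -> cl x = cl y.
Proof. by move=> h; apply: val_inj => /=; apply: canon_eq. Qed.

Lemma teq_cl x : teq (val (cl x)) x.
Proof. exact/teq_sym/canon_spec. Qed.

Lemma tens_ind (P : tens -> Prop) : (forall x, P (cl x)) -> forall a, P a.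
Proof. by move=> h a; rewrite -(cl_val a). Qed.

Definition smap (a : S) (x : seq (S * N)) := map (fun p => (a * p.1, p.2)) x.

Lemma smap_cat a x y : smap a (x ++ y) = smap a x ++ smap a y.
Proof. exact: map_cat. Qed.

Lemma teq_smap a x y : teq x y -> teq (smap a x) (smap a y).
Proof.
elim=> {x y} /=.
- by move=> x; apply: teq_refl.
- by move=> x y _; apply: teq_sym.
- by move=> x y z _ h1 _ h2; apply: teq_trans h1 h2.
- by move=> x x' y y' _ h1 _ h2; rewrite !smap_cat; apply: teq_cat.
- by move=> x y; rewrite !smap_cat; apply: teq_catC.
- by move=> s s' n; rewrite mulrDr; apply: teq_addl.
- by move=> s n n'; apply: teq_addr.
- by move=> n; rewrite mulr0; apply: teq_zero.
- by move=> r s n; rewrite mulrCA; apply: teq_bal.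
Qed.

Definition tadd (a b : tens) : tens := cl (val a ++ val b).
Definition tzero : tens := cl [::].
Definition tscale (s : S) (a : tens) : tens := cl (smap s (val a)).
Definition topp (a : tens) : tens := tscale (-1) a.

Lemma taddE x y : tadd (cl x) (cl y) = cl (x ++ y).
Proof. by apply: cl_eq; apply: teq_cat; apply: teq_cl. Qed.

Lemma tscaleE s x : tscale s (cl x) = cl (smap s x).
Proof. by apply: cl_eq; apply: teq_smap; apply: teq_cl. Qed.

Lemma teq_swap p q u v : teq ([:: p; q] ++ (u ++ v)) ((p :: u) ++ (q :: v)).
Proof.
have h : teq (q :: (u ++ v)) (u ++ q :: v).
  rewrite -cat1s catA -[q :: v]cat1s catA.
  by apply: teq_cat; [apply: teq_catC | apply: teq_refl].
rewrite /= -[p :: q :: _]cat1s -[p :: (u ++ _)]cat1s.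
by apply: teq_cat; [apply: teq_refl | exact: h].
Qed.

Lemma teq_addN x : teq (smap (-1) x ++ x) [::].
Proof.
elim: x => [|[s n] x IH] /=; first exact: teq_refl.
apply: teq_trans (teq_sym (teq_swap _ _ _ _)) _.
rewrite -[[::]]/([::] ++ [::]); apply: teq_cat => //.
apply: teq_trans (teq_sym (teq_addl _ _ _)) _.
by rewrite mulN1r addNr; apply: teq_zero.
Qed.

Lemma teq_scaleDl a b x : teq (smap (a + b) x) (smap a x ++ smap b x).
Proof.
elim: x => [|[s n] x IH] /=; first exact: teq_refl.
apply: teq_trans (teq_swap _ _ _ _).
rewrite -[_ :: smap (a + b) x]cat1s; apply: teq_cat => //.
by rewrite mulrDl; apply: teq_addl.
Qed.

Lemma taddA : associative tadd.
Proof.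
elim/tens_ind=> x; elim/tens_ind=> y; elim/tens_ind=> z.
by rewrite !taddE catA.
Qed.

Lemma taddC : commutative tadd.
Proof.
elim/tens_ind=> x; elim/tens_ind=> y; rewrite !taddE.
exact/cl_eq/teq_catC.
Qed.

Lemma tadd0 : left_id tzero tadd.
Proof. by elim/tens_ind=> x; rewrite taddE. Qed.

Lemma taddN : left_inverse tzero topp tadd.
Proof.
elim/tens_ind=> x; rewrite /topp tscaleE taddE.
exact/cl_eq/teq_addN.
Qed.

HB.instance Definition _ := GRing.isZmodule.Build tens taddA taddC tadd0 taddN.

Lemma tscaleA a b v : tscale a (tscale b v) = tscale (a * b) v.
Proof.
elim/tens_ind: v => x; rewrite !tscaleE /smap -map_comp.
by congr cl; apply: eq_map => -[s n] /=; rewrite mulrA.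
Qed.

Lemma tscale1 : left_id 1 tscale.
Proof.
elim/tens_ind=> x; rewrite tscaleE /smap.
by congr cl; rewrite -[RHS]map_id; apply: eq_map => -[s n] /=; rewrite mul1r.
Qed.

Lemma tscaleDr : right_distributive tscale +%R.
Proof.
move=> a; elim/tens_ind=> x; elim/tens_ind=> y.
by rewrite [cl x + cl y]taddE !tscaleE smap_cat [_ + _]taddE.
Qed.

Lemma tscaleDl v : {morph tscale^~ v : a b / a + b}.
Proof.
elim/tens_ind: v => x a b; rewrite !tscaleE.
change (cl (smap (a + b) x) = tadd (cl (smap a x)) (cl (smap b x))).
rewrite taddE.
exact/cl_eq/teq_scaleDl.
Qed.

HB.instance Definition _ :=
  GRing.Zmodule_isLmodule.Build S tens tscaleA tscale1 tscaleDr tscaleDl.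

End Obj.

Section Map.
Variables (A B : CAlg R) (g : AlgHom A B).

Definition gmap (x : seq (A * N)) : seq (B * N) := map (fun p => (g p.1, p.2)) x.

Lemma teq_gmap x y : teq x y -> teq (gmap x) (gmap y).
Proof.
elim=> {x y} /=.
- by move=> x; apply: teq_refl.
- by move=> x y _; apply: teq_sym.
- by move=> x y z _ h1 _ h2; apply: teq_trans h1 h2.
- by move=> x x' y y' _ h1 _ h2; rewrite /gmap !map_cat; apply: teq_cat.
- by move=> x y; rewrite /gmap !map_cat; apply: teq_catC.
- by move=> s s' n; rewrite rmorphD; apply: teq_addl.
- by move=> s n n'; apply: teq_addr.
- by move=> n; rewrite rmorph0; apply: teq_zero.
- by move=> r s n; rewrite rmorphM ahom_str; apply: teq_bal.
Qed.

Definition tmap (a : tens A) : tens B := @cl B (gmap (val a)).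

Lemma tmapE x : tmap (@cl A x) = @cl B (gmap x).
Proof. by apply: cl_eq; apply: teq_gmap; apply: teq_cl. Qed.

End Map.

Lemma tmap_add A B (g : AlgHom A B) (x y : tens A) :
  tmap g (x + y) = tmap g x + tmap g y.
Proof.
elim/tens_ind: x => x; elim/tens_ind: y => y.
by rewrite [_ + _]taddE !tmapE [_ + _]taddE /gmap map_cat.
Qed.

Lemma tmap_scale A B (g : AlgHom A B) (a : A) (x : tens A) :
  tmap g (a *: x) = g a *: tmap g x.
Proof.
elim/tens_ind: x => x.
rewrite [a *: _]tscaleE !tmapE [_ *: _]tscaleE /gmap /smap -!map_comp.
by congr cl; apply: eq_map => -[s n] /=; rewrite rmorphM.
Qed.

Lemma tmap_id A (g : AlgHom A A) : (forall a, g a = a) -> forall x, tmap g x = x.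
Proof.
move=> hg; elim/tens_ind=> x; rewrite tmapE /gmap.
by congr cl; rewrite -[RHS]map_id; apply: eq_map => -[s n] /=; rewrite hg.
Qed.

Lemma tmap_comp A B C (g : AlgHom A B) (h : AlgHom B C) (k : AlgHom A C) :
  (forall a, k a = h (g a)) -> forall x, tmap k x = tmap h (tmap g x).
Proof.
move=> hk; elim/tens_ind=> x; rewrite !tmapE /gmap -map_comp.
by congr cl; apply: eq_map => -[s n] /=; rewrite hk.
Qed.

Definition QC : RMod R :=
  {| Mobj := fun S => tens S;
     Mmap := @tmap;
     Mmap_add := @tmap_add;
     Mmap_scale := @tmap_scale;
     Mmap_id := @tmap_id;
     Mmap_comp := @tmap_comp |}.

End Tensor.

(** Both directions compare linear forms with module morphisms into a
    quasi-coherent module.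

    (=>) For an R-module N and an R-algebra A, a morphism f : M -> N turns
    into a linear form w_f on M over the square-zero extension
    A ⋉ (N ⊗ A), sending m to ε·f(m) where ε carries N ⊗ A; its component
    at R only sees f_R, and f_A is read off as the ε-part of w_f.

    (<=) A linear form w on M over S gives a morphism F_w : M -> S (S viewed
    as an R-module), F_w(m) = w(m ⊗ 1) in the S-algebra S ⊗ A.  Under
    S ⊗ R = S its component at R is w_R, and w is recovered from F_w by
    composing with the multiplication S ⊗ T -> T. *)

From HB Require Import structures.
From mathcomp Require Import all_boot all_order all_algebra.
From Stdlib Require Import FunctionalExtensionality ProofIrrelevance.
Import GRing.Theory.
Local Open Scope ring_scope.

Lemma RHom_ext (R : comPzRingType) (M M' : RMod R) (f g : RHom M M') :
  (forall A x, f A x = g A x) -> f = g.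
Proof.
case: f => f fD fZ fnat; case: g => g gD gZ gnat /= fg.
have fg' : f = g.
  by apply: functional_extensionality_dep => A; apply: functional_extensionality.
by subst g; f_equal; apply: proof_irrelevance.
Qed.

Lemma Dual_ext (R : comPzRingType) (M : RMod R) (S : CAlg R) (w w' : Dual M S) :
  (forall T phi x, w T phi x = w' T phi x) -> w = w'.
Proof.
case: w => w wD wZ wnat; case: w' => w' wD' wZ' wnat' /= ww'.
have ww'' : w = w'.
  apply: functional_extensionality_dep => T.
  by apply: functional_extensionality => phi; apply: functional_extensionality.
by subst w'; f_equal; apply: proof_irrelevance.
Qed.

Definition ahom_comp (R : comPzRingType) (A B C : CAlg R)
    (g : AlgHom A B) (h : AlgHom B C) : AlgHom A C :=
  @Build_AlgHom R A C (h \o g : {rmorphism _ -> _})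
    (fun r => etrans (congr1 h (ahom_str g r)) (ahom_str h r)).
Arguments ahom_comp {R A B C} g h.

Section TensorLift.
Variables (R : comPzRingType) (N : lmodType R) (S : CAlg R).

Lemma cl_cat (l l' : seq (S * N)) : cl (N:=N) l + cl (N:=N) l' = cl (N:=N) (l ++ l').
Proof. by rewrite [_ + _]taddE. Qed.

Lemma cl_sum (l : seq (S * N)) : cl (N:=N) l = \sum_(p <- l) cl (N:=N) [:: p].
Proof.
elim: l => [|p l IH]; first by rewrite big_nil.
by rewrite big_cons -[p :: l]cat1s -cl_cat IH.
Qed.

Variables (V : zmodType) (h : S -> N -> V).

Record balanced : Prop := Balanced {
  balancedDl : forall s s' n, h (s + s') n = h s n + h s' n;
  balancedDr : forall s n n', h s (n + n') = h s n + h s n';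
  balanced0 : forall n, h 0 n = 0;
  balancedZ : forall r s n, h s (r *: n) = h (calg_str S r * s) n
}.

Definition tens_lift (a : tens N S) : V := \sum_(p <- val a) h p.1 p.2.

Hypothesis hbal : balanced.

Lemma teq_sum_balanced x y :
  teq x y -> \sum_(p <- x) h p.1 p.2 = \sum_(p <- y) h p.1 p.2.
Proof.
case: hbal => hDl hDr h0 hZ.
elim=> {x y} //.
- by move=> x y z _ -> _ ->.
- by move=> x x' y y' _ exx' _ eyy'; rewrite !big_cat exx' eyy'.
- by move=> x y; rewrite !big_cat; exact: addrC.
- by move=> s s' n; rewrite !big_cons big_nil /= hDl !addr0.
- by move=> s n n'; rewrite !big_cons big_nil /= hDr !addr0.
- by move=> n; rewrite !big_cons !big_nil /= h0 addr0.
- by move=> r s n; rewrite !big_cons !big_nil /= hZ.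
Qed.

Lemma tens_lift_cl l : tens_lift (cl (N:=N) l) = \sum_(p <- l) h p.1 p.2.
Proof. exact: teq_sum_balanced (teq_cl _). Qed.

Lemma tens_liftD x y : tens_lift (x + y) = tens_lift x + tens_lift y.
Proof.
elim/tens_ind: x => x; elim/tens_ind: y => y.
by rewrite cl_cat !tens_lift_cl big_cat.
Qed.

End TensorLift.
Arguments cl_cat {R N S} l l'.
Arguments cl_sum {R N S} l.
Arguments balanced {R N S V} h.
Arguments tens_lift {R N S V} h a.
Arguments tens_lift_cl {R N S V h} hbal l.
Arguments tens_liftD {R N S V h} hbal x y.

Section SquareZero.
Variables (A : comPzRingType) (V : lmodType A).

Definition sqz := (A * V)%type.
HB.instance Definition _ := GRing.Zmodule.on sqz.

Definition sqz_one : sqz := (1, 0).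
Definition sqz_mul (x y : sqz) : sqz := (x.1 * y.1, x.1 *: y.2 + y.1 *: x.2).

Lemma sqz_mulA : associative sqz_mul.
Proof.
case=> x1 x2 [y1 y2] [z1 z2]; rewrite /sqz_mul /=; congr pair; first by rewrite mulrA.
rewrite !scalerDr !scalerA addrA [z1 * x1]mulrC [z1 * y1]mulrC.
by rewrite -addrA [_ + (y1 * z1) *: _]addrC addrA.
Qed.

Lemma sqz_mulC : commutative sqz_mul.
Proof. by case=> x1 x2 [y1 y2]; rewrite /sqz_mul /= mulrC addrC. Qed.

Lemma sqz_mul1 : left_id sqz_one sqz_mul.
Proof. by case=> x1 x2; rewrite /sqz_mul /= mul1r scale1r scaler0 addr0. Qed.

Lemma sqz_mulDl : left_distributive sqz_mul +%R.
Proof.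
case=> x1 x2 [y1 y2] [z1 z2]; rewrite /sqz_mul /=; congr pair; first by rewrite mulrDl.
by rewrite scalerDl scalerDr addrACA.
Qed.

HB.instance Definition _ :=
  GRing.Zmodule_isComPzRing.Build sqz sqz_mulA sqz_mulC sqz_mul1 sqz_mulDl.

Definition sqz_inl (a : A) : sqz := (a, 0).

Lemma sqz_inl_is_zmod_morphism : GRing.zmod_morphism sqz_inl.
Proof. by move=> a b; rewrite /sqz_inl; congr pair => /=; rewrite subr0. Qed.

Lemma sqz_inl_is_monoid_morphism : GRing.monoid_morphism sqz_inl.
Proof.
split=> // a b; rewrite /sqz_inl; congr pair => /=.
by rewrite !scaler0 addr0.
Qed.

HB.instance Definition _ :=
  GRing.isZmodMorphism.Build A sqz sqz_inl sqz_inl_is_zmod_morphism.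
HB.instance Definition _ :=
  GRing.isMonoidMorphism.Build A sqz sqz_inl sqz_inl_is_monoid_morphism.

End SquareZero.
Arguments sqz {A} V.
Arguments sqz_inl {A V} a.

Definition sqz_alg (R : comPzRingType) (S : CAlg R) (V : lmodType S) : CAlg R :=
  {| calg_ring := sqz V; calg_str := (sqz_inl \o calg_str S : {rmorphism _ -> _}) |}.
Arguments sqz_alg {R S} V.

Definition sqz_in (R : comPzRingType) (S : CAlg R) (V : lmodType S) :
    AlgHom S (sqz_alg V) :=
  @Build_AlgHom R S (sqz_alg V) (sqz_inl : {rmorphism _ -> _}) (fun r => erefl).
Arguments sqz_in {R S} V.

Section HomToDual.
Variables (R : comPzRingType) (N : lmodType R) (A : CAlg R).

Definition sqz_tens : CAlg R := sqz_alg (tens N A).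

Definition sqz_eps (n : N) : sqz_tens := (0, cl (N:=N) [:: (1, n)]).

Lemma sqz_epsD n n' : sqz_eps (n + n') = sqz_eps n + sqz_eps n'.
Proof.
rewrite /sqz_eps; congr pair; first by rewrite /= addr0.
by rewrite /= cl_cat; apply: cl_eq; apply: teq_addr.
Qed.

Lemma sqz_epsZ r n : sqz_eps (r *: n) = calg_str sqz_tens r * sqz_eps n.
Proof.
rewrite /sqz_eps; congr pair; first by rewrite /= mulr0.
rewrite /= scaler0 addr0 [RHS]tscaleE /smap /=.
by apply: cl_eq; apply: teq_bal.
Qed.

Section EpsEval.
Variables (T : CAlg R) (phi : AlgHom sqz_tens T).

Lemma eps_mul_balanced : balanced (fun (t : T) n => phi (sqz_eps n) * t).
Proof.
split=> [s s' n|s n n'|n|r s n]; first by rewrite mulrDr.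
- by rewrite sqz_epsD rmorphD mulrDl.
- by rewrite mulr0.
- by rewrite sqz_epsZ rmorphM ahom_str mulrCA mulrA.
Qed.

Definition eps_eval : tens N T -> T :=
  tens_lift (fun (t : T) n => phi (sqz_eps n) * t).

Lemma eps_eval_cl l : eps_eval (cl l) = \sum_(p <- l) phi (sqz_eps p.2) * p.1.
Proof. exact: tens_lift_cl eps_mul_balanced l. Qed.

Lemma eps_evalD x y : eps_eval (x + y) = eps_eval x + eps_eval y.
Proof. exact: tens_liftD eps_mul_balanced x y. Qed.

Lemma eps_evalZ t x : eps_eval (t *: x) = t * eps_eval x.
Proof.
elim/tens_ind: x => x; rewrite [t *: _]tscaleE !eps_eval_cl big_map mulr_sumr.
by apply: eq_bigr => p _; rewrite /= mulrCA.
Qed.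

End EpsEval.
Arguments eps_eval {T} phi _.

Lemma eps_eval_nat T T' (phi : AlgHom sqz_tens T) (phi' : AlgHom sqz_tens T')
    (g : AlgHom T T') :
  (forall s, g (phi s) = phi' s) ->
  forall x, eps_eval phi' (tmap g x) = g (eps_eval phi x).
Proof.
move=> gphi; elim/tens_ind=> x; rewrite tmapE !eps_eval_cl big_map rmorph_sum.
by apply: eq_bigr => p _; rewrite /= rmorphM gphi.
Qed.

Lemma eps_eval_sqz_in (u : tens N A) :
  eps_eval (alg_id sqz_tens) (tmap (sqz_in (tens N A)) u) = (0, u).
Proof.
elim/tens_ind: u => l; rewrite tmapE eps_eval_cl big_map.
elim: l => [|[a n] l IH]; first by rewrite big_nil.
rewrite big_cons IH -[_ :: l]cat1s -cl_cat.
rewrite /GRing.mul /= /sqz_mul /= /sqz_inl /= mul0r scaler0 add0r.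
congr pair; first by rewrite /= addr0.
by rewrite /= [_ *: _]tscaleE /smap /= mulr1.
Qed.

Variables (M : RMod R) (f : RHom M (QC N)).

Definition hom_dual : Dual M sqz_tens.
Proof.
refine (@Build_Dual R M sqz_tens (fun T phi m => eps_eval phi (f T m)) _ _ _).
- by move=> T phi x y; rewrite hfun_add eps_evalD.
- by move=> T phi t x; rewrite hfun_scale eps_evalZ.
- by move=> T T' phi phi' g gphi x; rewrite hfun_nat; exact: eps_eval_nat.
Defined.

End HomToDual.
Arguments hom_dual {R N} A {M} f.

Lemma dually_separated_hom_inj (R : comPzRingType) (M : RMod R) :
  dually_separated M ->
  forall N : lmodType R, injective (fun f : RHom M (QC N) => f (Ralg R)).
Proof.
move=> sepM N f g /= fgR; apply: RHom_ext => A x.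
have wfg : hom_dual A f = hom_dual A g.
  apply: sepM; apply: functional_extensionality => m.
  by rewrite /dual_to_qc /= !hfun_nat fgR.
have := congr1 (fun w : Dual M _ => w _ (alg_id _) (Mmap M (sqz_in _) x)) wfg.
by rewrite /= !hfun_nat !eps_eval_sqz_in => -[].
Qed.

(* S as an R-module; a copy of the carrier so that [*:] is R-scaling. *)
Definition Smod (R : comPzRingType) (S : CAlg R) : Type := calg_ring S.
Arguments Smod {R} S.
HB.instance Definition _ (R : comPzRingType) (S : CAlg R) := GRing.Zmodule.on (Smod S).

Section SmodModule.
Variables (R : comPzRingType) (S : CAlg R).

Definition Smod_scale (r : R) (s : Smod S) : Smod S :=
  calg_str S r * (s : calg_ring S).

Lemma Smod_scaleA a b v : Smod_scale a (Smod_scale b v) = Smod_scale (a * b) v.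
Proof. by rewrite /Smod_scale rmorphM mulrA. Qed.

Lemma Smod_scale1 : left_id 1 Smod_scale.
Proof. by move=> v; rewrite /Smod_scale rmorph1 mul1r. Qed.

Lemma Smod_scaleDr : right_distributive Smod_scale +%R.
Proof. by move=> a u v; rewrite /Smod_scale mulrDr. Qed.

Lemma Smod_scaleDl v : {morph Smod_scale^~ v : a b / a + b}.
Proof. by move=> a b; rewrite /Smod_scale rmorphD mulrDl. Qed.

End SmodModule.

HB.instance Definition _ (R : comPzRingType) (S : CAlg R) :=
  GRing.Zmodule_isLmodule.Build R (Smod S) (@Smod_scaleA R S) (@Smod_scale1 R S)
    (@Smod_scaleDr R S) (@Smod_scaleDl R S).

Lemma SmodZ (R : comPzRingType) (S : CAlg R) r (s : Smod S) :
  r *: s = (calg_str S r * (s : calg_ring S) : calg_ring S).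
Proof. by []. Qed.

Section TensorAlgebra.
Variables (R : comPzRingType) (S A : CAlg R).
Notation SM := (Smod S).

Lemma teq_map1 (f g : A * SM -> A * SM) l :
  (forall q, teq [:: f q] [:: g q]) -> teq (map f l) (map g l).
Proof.
move=> fg; elim: l => [|q l IH] /=; first exact: teq_refl.
by rewrite -cat1s -[g q :: _]cat1s; apply: teq_cat.
Qed.

Lemma teq_map2 (f g h : A * SM -> A * SM) l :
  (forall q, teq [:: f q] [:: g q; h q]) -> teq (map f l) (map g l ++ map h l).
Proof.
move=> fgh; elim: l => [|q l IH] /=; first exact: teq_refl.
apply: teq_trans (teq_swap _ _ _ _).
by rewrite -cat1s; apply: teq_cat.
Qed.

Lemma teq_map0 (f : A * SM -> A * SM) l :
  (forall q, teq [:: f q] [::]) -> teq (map f l) [::].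
Proof.
move=> f0; elim: l => [|q l IH] /=; first exact: teq_refl.
by rewrite -cat1s -[[::]]/([::] ++ [::]); apply: teq_cat.
Qed.

Definition mulp (p q : A * SM) : A * SM :=
  (p.1 * q.1, (p.2 : calg_ring S) * (q.2 : calg_ring S) : SM).

Lemma mulpA p q r : mulp (mulp p q) r = mulp p (mulp q r).
Proof. by rewrite /mulp /= !mulrA. Qed.

Lemma mulpC p q : mulp p q = mulp q p.
Proof. by rewrite /mulp /= mulrC [(q.2 : calg_ring S) * _]mulrC. Qed.

Fixpoint lprod (l l' : seq (A * SM)) : seq (A * SM) :=
  if l is p :: l then map (mulp p) l' ++ lprod l l' else [::].

Lemma lprod1 p l : lprod [:: p] l = map (mulp p) l.
Proof. by rewrite /= cats0. Qed.

Lemma lprod_cat l1 l2 l' : lprod (l1 ++ l2) l' = lprod l1 l' ++ lprod l2 l'.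
Proof. by elim: l1 => //= p l1 IH; rewrite IH catA. Qed.

Lemma lprod_map p l2 l3 : lprod (map (mulp p) l2) l3 = map (mulp p) (lprod l2 l3).
Proof.
elim: l2 => //= q l2 IH; rewrite IH map_cat -map_comp; congr (_ ++ _).
by apply: eq_map => r /=; rewrite mulpA.
Qed.

Lemma lprodA l1 l2 l3 : lprod (lprod l1 l2) l3 = lprod l1 (lprod l2 l3).
Proof. by elim: l1 => //= p l1 IH; rewrite lprod_cat IH lprod_map. Qed.

Lemma big_lprod (V : zmodType) (F : A * SM -> V) l l' :
  \sum_(x <- lprod l l') F x = \sum_(p <- l) \sum_(q <- l') F (mulp p q).
Proof.
elim: l => [|p l IH] /=; first by rewrite !big_nil.
by rewrite big_cat IH big_cons big_map.
Qed.

Lemma teq_mulp p l1 l2 : teq l1 l2 -> teq (map (mulp p) l1) (map (mulp p) l2).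
Proof.
elim=> {l1 l2} /=.
- by move=> x; apply: teq_refl.
- by move=> x y _; apply: teq_sym.
- by move=> x y z _ h1 _ h2; apply: teq_trans h1 h2.
- by move=> x x' y y' _ h1 _ h2; rewrite !map_cat; apply: teq_cat.
- by move=> x y; rewrite !map_cat; apply: teq_catC.
- by move=> s s' n; rewrite /mulp /= mulrDr; apply: teq_addl.
- by move=> s n n'; rewrite /mulp /= mulrDr; apply: teq_addr.
- by move=> n; rewrite /mulp /= mulr0; apply: teq_zero.
- move=> r s n; rewrite /mulp /= mulrCA -SmodZ [p.1 * (_ * _)]mulrCA.
  exact: teq_bal.
Qed.

Lemma teq_lprodl l1 l2 l' : teq l1 l2 -> teq (lprod l1 l') (lprod l2 l').
Proof.
elim=> {l1 l2}.
- by move=> x; apply: teq_refl.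
- by move=> x y _; apply: teq_sym.
- by move=> x y z _ h1 _ h2; apply: teq_trans h1 h2.
- by move=> x x' y y' _ h1 _ h2; rewrite !lprod_cat; apply: teq_cat.
- by move=> x y; rewrite !lprod_cat; apply: teq_catC.
- move=> s s' n; rewrite lprod1 /= cats0; apply: teq_map2 => q.
  by rewrite /mulp /= mulrDl; apply: teq_addl.
- move=> s n n'; rewrite lprod1 /= cats0; apply: teq_map2 => q.
  by rewrite /mulp /= mulrDl; apply: teq_addr.
- move=> n; rewrite lprod1 /=; apply: teq_map0 => q.
  by rewrite /mulp /= mul0r; apply: teq_zero.
- move=> r s n; rewrite !lprod1; apply: teq_map1 => q; rewrite /mulp /= -mulrA.
  by rewrite !SmodZ -mulrA; apply: teq_bal.
Qed.

Lemma teq_lprodr l l1 l2 : teq l1 l2 -> teq (lprod l l1) (lprod l l2).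
Proof.
move=> e12; elim: l => [|p l IH] /=; first exact: teq_refl.
by apply: teq_cat => //; apply: teq_mulp.
Qed.

Definition tprod : Type := tens SM A.
HB.instance Definition _ := GRing.Zmodule.on tprod.

Definition tprod_mul (x y : tprod) : tprod := cl (N:=SM) (lprod (val x) (val y)).
Definition tprod_one : tprod := cl (N:=SM) [:: (1, 1)].

Lemma tprod_mulE l l' : tprod_mul (cl (N:=SM) l) (cl (N:=SM) l') = cl (N:=SM) (lprod l l').
Proof.
apply: cl_eq; apply: (teq_trans (teq_lprodl _ _ _ (teq_cl l))).
exact: (teq_lprodr _ _ _ (teq_cl l')).
Qed.

Lemma tprod_mulA : associative tprod_mul.
Proof.
elim/tens_ind=> x; elim/tens_ind=> y; elim/tens_ind=> z.
by rewrite !tprod_mulE lprodA.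
Qed.

Lemma tprod_mulC : commutative tprod_mul.
Proof.
elim/tens_ind=> x; elim/tens_ind=> y; rewrite !tprod_mulE.
rewrite (cl_sum (lprod x y)) (cl_sum (lprod y x)) !big_lprod exchange_big.
by apply: eq_bigr => q _; apply: eq_bigr => p _; rewrite mulpC.
Qed.

Lemma tprod_mul1 : left_id tprod_one tprod_mul.
Proof.
elim/tens_ind=> x; rewrite tprod_mulE lprod1; congr cl.
by rewrite -[RHS]map_id; apply: eq_map => -[a s]; rewrite /mulp /= !mul1r.
Qed.

Lemma tprod_mulDl : left_distributive tprod_mul +%R.
Proof.
elim/tens_ind=> x; elim/tens_ind=> y; elim/tens_ind=> z.
by rewrite cl_cat !tprod_mulE lprod_cat -cl_cat.
Qed.

End TensorAlgebra.
Arguments tprod {R} S A.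
Arguments tprod_mulE {R S A} l l'.
Arguments lprod {R S A} l l'.
Arguments mulp {R S A} p q.
Arguments tprod_mul {R S A} x y.
Arguments tprod_one {R S A}. 
Arguments big_lprod {R S A V} F l l'.

HB.instance Definition _ (R : comPzRingType) (S A : CAlg R) :=
  GRing.Zmodule_isComPzRing.Build (tprod S A) (@tprod_mulA R S A) (@tprod_mulC R S A)
    (@tprod_mul1 R S A) (@tprod_mulDl R S A).

Section TensorAlgebraMorphisms.
Variables (R : comPzRingType) (S A : CAlg R).

Definition tprod_inA (a : A) : tprod S A := cl (N:=Smod S) [:: (a, 1)].
Definition tprod_inS (s : S) : tprod S A := cl (N:=Smod S) [:: (1, s)].

Lemma tprod_inA_is_nmod_morphism : nmod_morphism tprod_inA.
Proof.
split; first by apply: cl_eq; apply: teq_zero.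
by move=> a b; rewrite /tprod_inA cl_cat; apply: cl_eq; apply: teq_addl.
Qed.

Lemma tprod_inA_is_monoid_morphism : monoid_morphism tprod_inA.
Proof. by split=> // a b; rewrite /tprod_inA /GRing.mul /= tprod_mulE /= /mulp /= mulr1. Qed.

Lemma tprod_inS_is_nmod_morphism : nmod_morphism tprod_inS.
Proof.
split; last by move=> a b; rewrite /tprod_inS cl_cat; apply: cl_eq; apply: teq_addr.
rewrite /tprod_inS -[(0 : calg_ring S)](scale0r (1 : Smod S)); apply: cl_eq.
by apply: teq_trans (teq_bal _ _ _) _; rewrite rmorph0 mul0r; apply: teq_zero.
Qed.

Lemma tprod_inS_is_monoid_morphism : monoid_morphism tprod_inS.
Proof. by split=> // a b; rewrite /tprod_inS /GRing.mul /= tprod_mulE /= /mulp /= mulr1. Qed.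

End TensorAlgebraMorphisms.
Arguments tprod_inA {R S A} a.
Arguments tprod_inS {R S A} s.

HB.instance Definition _ (R : comPzRingType) (S A : CAlg R) :=
  GRing.isNmodMorphism.Build A (tprod S A) tprod_inA
    (@tprod_inA_is_nmod_morphism R S A).
HB.instance Definition _ (R : comPzRingType) (S A : CAlg R) :=
  GRing.isMonoidMorphism.Build A (tprod S A) tprod_inA
    (@tprod_inA_is_monoid_morphism R S A).
HB.instance Definition _ (R : comPzRingType) (S A : CAlg R) :=
  GRing.isNmodMorphism.Build S (tprod S A) tprod_inS
    (@tprod_inS_is_nmod_morphism R S A).
HB.instance Definition _ (R : comPzRingType) (S A : CAlg R) :=
  GRing.isMonoidMorphism.Build S (tprod S A) tprod_inS
    (@tprod_inS_is_monoid_morphism R S A).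

Definition tprod_alg (R : comPzRingType) (S A : CAlg R) : CAlg R :=
  {| calg_ring := tprod S A; calg_str := (tprod_inA \o calg_str A : {rmorphism _ -> _}) |}.
Arguments tprod_alg {R} S A.

Definition tprod_inA_ahom (R : comPzRingType) (S A : CAlg R) : AlgHom A (tprod_alg S A) :=
  @Build_AlgHom R A (tprod_alg S A) (tprod_inA : {rmorphism _ -> _}) (fun r => erefl).
Arguments tprod_inA_ahom {R} S A.

Lemma tprod_inS_str (R : comPzRingType) (S A : CAlg R) r :
  tprod_inS (calg_str S r) = calg_str (tprod_alg S A) r.
Proof.
rewrite /tprod_inS /= /tprod_inA; apply: cl_eq.
rewrite -[calg_str A r]mulr1 -[calg_str S r]mulr1.
exact: (@teq_bal R (Smod S) A r 1 (1 : Smod S)).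
Qed.

Definition tprod_inS_ahom (R : comPzRingType) (S A : CAlg R) : AlgHom S (tprod_alg S A) :=
  @Build_AlgHom R S (tprod_alg S A) (tprod_inS : {rmorphism _ -> _})
    (@tprod_inS_str R S A).
Arguments tprod_inS_ahom {R} S A.

Section TensorAlgebraMap.
Variables (R : comPzRingType) (S A B : CAlg R) (g : AlgHom A B).

Definition tprod_map (x : tprod S A) : tprod S B := tmap g x.

Lemma gmap_lprod (l l' : seq (A * Smod S)) :
  gmap g (lprod l l') = lprod (gmap g l) (gmap g l').
Proof.
elim: l => //= p l IH; rewrite /gmap map_cat -IH -!map_comp; congr (_ ++ _).
by apply: eq_map => q /=; rewrite /mulp /= rmorphM.
Qed.

Lemma tprod_map_is_nmod_morphism : nmod_morphism tprod_map.
Proof. by split; [rewrite /tprod_map -[0]/(cl (N:=Smod S) [::]) tmapE | exact: tmap_add]. Qed.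

Lemma tprod_map_is_monoid_morphism : monoid_morphism tprod_map.
Proof.
split; first by rewrite /tprod_map /GRing.one /= /tprod_one tmapE /gmap /= rmorph1.
elim/tens_ind=> x; elim/tens_ind=> y.
by rewrite /tprod_map /GRing.mul /= tprod_mulE !tmapE tprod_mulE gmap_lprod.
Qed.

End TensorAlgebraMap.

HB.instance Definition _ (R : comPzRingType) (S A B : CAlg R) (g : AlgHom A B) :=
  GRing.isNmodMorphism.Build (tprod S A) (tprod S B) (@tprod_map R S A B g)
    (@tprod_map_is_nmod_morphism R S A B g).
HB.instance Definition _ (R : comPzRingType) (S A B : CAlg R) (g : AlgHom A B) :=
  GRing.isMonoidMorphism.Build (tprod S A) (tprod S B) (@tprod_map R S A B g)
    (@tprod_map_is_monoid_morphism R S A B g).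

Lemma tprod_map_str (R : comPzRingType) (S A B : CAlg R) (g : AlgHom A B) r :
  @tprod_map R S A B g (calg_str (tprod_alg S A) r) = calg_str (tprod_alg S B) r.
Proof. by rewrite /tprod_map /= /tprod_inA tmapE /gmap /= ahom_str. Qed.

Definition tprod_ahom (R : comPzRingType) (S A B : CAlg R) (g : AlgHom A B) :
    AlgHom (tprod_alg S A) (tprod_alg S B) :=
  @Build_AlgHom R (tprod_alg S A) (tprod_alg S B)
    (@tprod_map R S A B g : {rmorphism _ -> _}) (@tprod_map_str R S A B g).
Arguments tprod_ahom {R} S {A B} g.

Section TensorAlgebraLift.
Variables (R : comPzRingType) (S A T : CAlg R) (al : AlgHom A T) (be : AlgHom S T).

Lemma mul_balanced : balanced (fun (a : A) (s : Smod S) => al a * be s).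
Proof.
split=> [a a' s|a s s'|s|r a s].
- by rewrite rmorphD mulrDl.
- by rewrite (rmorphD be) mulrDr.
- by rewrite rmorph0 mul0r.
- by rewrite SmodZ (rmorphM be) (rmorphM al) !ahom_str mulrCA mulrA.
Qed.

Definition tprod_lift (x : tprod S A) : T :=
  tens_lift (fun (a : A) (s : Smod S) => al a * be s) x.

Lemma tprod_lift_cl l : tprod_lift (cl l) = \sum_(p <- l) al p.1 * be p.2.
Proof. exact: tens_lift_cl mul_balanced l. Qed.

Lemma tprod_lift_cl1 a s : tprod_lift (cl (N:=Smod S) [:: (a, s)]) = al a * be s.
Proof. by rewrite tprod_lift_cl big_cons big_nil addr0. Qed.

Lemma tprod_lift_is_nmod_morphism : nmod_morphism tprod_lift.
Proof.
split; first by rewrite -[0]/(cl (N:=Smod S) [::]) tprod_lift_cl big_nil.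
exact: tens_liftD mul_balanced.
Qed.

Lemma tprod_lift_is_monoid_morphism : monoid_morphism tprod_lift.
Proof.
split; first by rewrite tprod_lift_cl1 !rmorph1 mulr1.
elim/tens_ind=> x; elim/tens_ind=> y.
rewrite /tprod_lift [X in tens_lift _ X = _](_ : _ = tprod_mul (cl x) (cl y)) //.
rewrite tprod_mulE -!/(tprod_lift _) !tprod_lift_cl big_lprod mulr_suml.
apply: eq_bigr => p _; rewrite mulr_sumr; apply: eq_bigr => q _.
by rewrite /mulp /= !rmorphM mulrACA.
Qed.

Lemma tprod_lift_str r : tprod_lift (calg_str (tprod_alg S A) r) = calg_str T r.
Proof. by rewrite tprod_lift_cl1 rmorph1 mulr1 ahom_str. Qed.

End TensorAlgebraLift.
Arguments tprod_lift {R S A T} al be x.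

HB.instance Definition _ (R : comPzRingType) (S A T : CAlg R) (al : AlgHom A T)
    (be : AlgHom S T) :=
  GRing.isNmodMorphism.Build (tprod S A) T (tprod_lift al be)
    (@tprod_lift_is_nmod_morphism R S A T al be).
HB.instance Definition _ (R : comPzRingType) (S A T : CAlg R) (al : AlgHom A T)
    (be : AlgHom S T) :=
  GRing.isMonoidMorphism.Build (tprod S A) T (tprod_lift al be)
    (@tprod_lift_is_monoid_morphism R S A T al be).

Definition tprod_lift_ahom (R : comPzRingType) (S A T : CAlg R) (al : AlgHom A T)
    (be : AlgHom S T) : AlgHom (tprod_alg S A) T :=
  @Build_AlgHom R (tprod_alg S A) T (tprod_lift al be : {rmorphism _ -> _})
    (@tprod_lift_str R S A T al be).
Arguments tprod_lift_ahom {R S A T} al be.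

Section TensorAlgebraLiftProps.
Variables (R : comPzRingType) (S A T : CAlg R) (al : AlgHom A T) (be : AlgHom S T).

Lemma tprod_lift_inA a : tprod_lift_ahom al be (tprod_inA_ahom S A a) = al a.
Proof. by rewrite /= tprod_lift_cl1 rmorph1 mulr1. Qed.

Lemma tprod_lift_inS s : tprod_lift_ahom al be (tprod_inS_ahom S A s) = be s.
Proof. by rewrite /= tprod_lift_cl1 rmorph1 mul1r. Qed.

End TensorAlgebraLiftProps.
Arguments tprod_lift_inA {R S A T} al be a.
Arguments tprod_lift_inS {R S A T} al be s.

Lemma tprod_inA_mulE (R : comPzRingType) (S A : CAlg R) (a : A) (x : tprod S A) :
  tprod_inA a * x = (a *: (x : tens (Smod S) A) : tens (Smod S) A).
Proof.
elim/tens_ind: x => x.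
rewrite [LHS](_ : _ = tprod_mul (cl (N:=Smod S) [:: (a, 1)]) (cl x)) //.
rewrite tprod_mulE lprod1 [RHS]tscaleE /smap; congr cl.
by apply: eq_map => -[b s]; rewrite /mulp /= mul1r.
Qed.

Lemma tprod_inS_lift_unit (R : comPzRingType) (S : CAlg R) (x : tprod S (Ralg R)) :
  tprod_inS (tprod_lift (alg_unit S) (alg_id S) x) = x.
Proof.
elim/tens_ind: x => l.
rewrite tprod_lift_cl rmorph_sum [RHS]cl_sum.
apply: eq_bigr => -[r s] _; rewrite /= /tprod_inS; apply: cl_eq.
rewrite -SmodZ -[X in teq _ [:: (X, _)]]mulr1.
exact: (@teq_bal R (Smod S) (Ralg R) r 1 s).
Qed.

Section DualToHom.
Variables (R : comPzRingType) (M : RMod R) (S : CAlg R) (w : Dual M S).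

Definition dual_hom : RHom M (QC (Smod S)).
Proof.
refine (@Build_RHom R M (QC (Smod S))
  (fun A m => w (tprod_alg S A) (tprod_inS_ahom S A) (Mmap M (tprod_inA_ahom S A) m))
  _ _ _).
- by move=> A x y; rewrite Mmap_add dfun_add.
- by move=> A a x; rewrite Mmap_scale dfun_scale; exact: tprod_inA_mulE.
- move=> A B g x /=.
  rewrite -(@Mmap_comp _ M _ _ _ g _ (ahom_comp g (tprod_inA_ahom S B))) //.
  rewrite (@Mmap_comp _ M _ _ _ (tprod_inA_ahom S A) (tprod_ahom S g)
    (ahom_comp g (tprod_inA_ahom S B))); last by move=> a; rewrite /= /tprod_map tmapE.
  rewrite (dfun_nat w (phi := tprod_inS_ahom S A) (phi' := tprod_inS_ahom S B)) //.
  by move=> s; rewrite /= /tprod_map tmapE /gmap /= rmorph1.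
Defined.

Lemma dual_homK T (phi : AlgHom S T) m :
  w T phi m = tprod_lift (alg_id T) phi (dual_hom T m).
Proof.
have := dfun_nat w (tprod_lift_inS (alg_id T) phi) (Mmap M (tprod_inA_ahom S T) m).
by rewrite -(@Mmap_comp _ M _ _ _ _ _ (alg_id T)) ?Mmap_id // => a; rewrite tprod_lift_inA.
Qed.

Lemma dual_hom_R m : dual_hom (Ralg R) m = tprod_inS (dual_to_qc w m).
Proof.
rewrite -[LHS]tprod_inS_lift_unit; congr tprod_inS.
have := dfun_nat w (tprod_lift_inS (alg_unit S) (alg_id S))
  (Mmap M (tprod_inA_ahom S (Ralg R)) m).
by rewrite -(@Mmap_comp _ M _ _ _ _ _ (alg_unit S)) // => a; rewrite tprod_lift_inA.
Qed.

End DualToHom.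
Arguments dual_hom {R M S} w.

Lemma hom_inj_dually_separated (R : comPzRingType) (M : RMod R) :
  (forall N : lmodType R, injective (fun f : RHom M (QC N) => f (Ralg R))) ->
  dually_separated M.
Proof.
move=> injR S w w' ww'R.
have ww' : dual_hom w = dual_hom w'.
  apply: (injR (Smod S)); apply: functional_extensionality => m.
  by rewrite !dual_hom_R ww'R.
by apply: Dual_ext => T phi m; rewrite !dual_homK ww'.
Qed.

Theorem theorem3p7 (R : comPzRingType) (M : RMod R) :
  dually_separated M <->
  (forall N : lmodType R,
     injective (fun f : RHom M (QC N) => f (Ralg R))).
Proof.
split; [exact: dually_separated_hom_inj | exact: hom_inj_dually_separated].
Qed.
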